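(* Let $G=(V,E)$ be a finite graph. The function $S^B_G$ is non-negative and concave on $FM(G)$.
   Context: $FM(G)=\{\mathbf{x}\in\mathbb{R}^E: x_e\ge0,\ \sum_{e\in\partial v}x_e\le1\ \forall v\in V\}$, where $\partial v$ is the set of edges incident to $v$, and \[ S^B_G(\mathbf{x})=\sum_{e\in E}\big( -x_e\ln x_e +(1-x_e)\ln (1-x_e)\big) - \sum_{v\in V}\Big( 1-\sum_{e\in \partial v} x_e\Big)\ln\Big( 1-\sum_{e\in \partial v}x_e\Big), \] with $0\ln 0=0$. *)

From HB Require Import structures.
From mathcomp Require Import all_boot all_order all_algebra.
From mathcomp Require Import all_classical all_reals.
From mathcomp Require Import exp.
Set Implicit Arguments. Unset Strict Implicit. Unset Printing Implicit Defensive.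
Import Order.TTheory GRing.Theory Num.Theory.
Local Open Scope ring_scope.

(* A finite simple graph G = (V, E): V a finite type, adj a symmetric,
   irreflexive boolean relation.  The edge set E is the finite type of
   2-element vertex sets {u, v} with adj u v. *)
Definition is_edge (V : finType) (adj : rel V) (e : {set V}) : bool :=
  [exists u, exists v, adj u v && (e == [set u; v])].

Definition edge (V : finType) (adj : rel V) := {e : {set V} | is_edge adj e}.

Definition vsum (R : realType) (V : finType) (adj : rel V)
  (x : edge adj -> R) (v : V) : R :=
  \sum_(e : edge adj | v \in val e) x e.

Definition xlnx (R : realType) (t : R) : R := if t == 0 then 0 else t * ln t.

Definition FM (R : realType) (V : finType) (adj : rel V)
  (x : edge adj -> R) : Prop :=
  (forall e, 0 <= x e) /\ (forall v, vsum x v <= 1).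

Definition SB (R : realType) (V : finType) (adj : rel V)
  (x : edge adj -> R) : R :=
  \sum_(e : edge adj) (- xlnx (x e) + xlnx (1 - x e))
  - \sum_(v : V) xlnx (1 - vsum x v).

From HB Require Import structures.
From mathcomp Require Import all_boot all_order all_algebra.
From mathcomp Require Import all_classical all_reals.
From mathcomp Require Import exp.
From mathcomp Require Import topology normedtype derive realfun.
From mathcomp Require Import ring lra.
Set Implicit Arguments. Unset Strict Implicit. Unset Printing Implicit Defensive.
Import Order.TTheory GRing.Theory Num.Theory numFieldNormedType.Exports.
Local Open Scope classical_set_scope.
Local Open Scope ring_scope.

(* Every edge has two endpoints, so 2 S^B_G is a sum over the vertices v of
   \sum_(e in dv) phi (x_e) - 2 (1 - s) ln (1 - s), with s = \sum_(e in dv) x_e and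
   phi u = (1 - u) ln (1 - u) - u ln u (edge_entropy): both claims are local to a
   vertex.  phi is superadditive on [0, 1] (the case of three coordinates summing
   to 1), so \sum_e phi (x_e) >= phi s >= 2 (1 - s) ln (1 - s).
   For concavity, S^B_G (t x + (1 - t) y) - t S^B_G x - (1 - t) S^B_G y is a
   nonnegative combination of Bregman-type divergences D(x, z) (bethe_div) built
   from relative entropy terms c ln (c / m).  Nonnegativity of D reduces in the
   same way, by superadditivity, to three coordinates, where the divergence along
   the segment from q to p vanishes to first order at q and is convex (a 3 x 3
   Hessian check). *)

Section Entropy.
Variable R : realType.

Lemma xlnxE (c : R) : xlnx c = c * ln c.
Proof. by rewrite /xlnx; case: eqP => [->|]; rewrite ?mul0r. Qed.

Lemma xlnx0 : xlnx 0 = 0 :> R.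
Proof. by rewrite xlnxE mul0r. Qed.

Lemma xlnx1 : xlnx 1 = 0 :> R.
Proof. by rewrite xlnxE ln1 mulr0. Qed.

Lemma xlnx_le0 (c : R) : 0 <= c <= 1 -> xlnx c <= 0.
Proof. by case/andP=> c0 c1; rewrite xlnxE mulr_ge0_le0 // ln_le0. Qed.

Definition kl (c m : R) := xlnx c - c * ln m.

Lemma klE (c m : R) : kl c m = c * ln c - c * ln m.
Proof. by rewrite /kl xlnxE. Qed.

Lemma kl0 (m : R) : kl 0 m = 0.
Proof. by rewrite klE !mul0r subrr. Qed.

Lemma ln_le_subr1 (x : R) : 0 < x -> ln x <= x - 1.
Proof. by move=> x0; rewrite -{1}(subrKC 1 x) le_ln1Dx //; lra. Qed.

Lemma kl_ge_sub (c m : R) : 0 <= c -> 0 <= m -> (m = 0 -> c = 0) -> c - m <= kl c m.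
Proof.
move=> c0 m0 mc; have [->|c_neq0] := eqVneq c 0; first by rewrite kl0 sub0r oppr_le0.
have cp : 0 < c by rewrite lt_def c_neq0.
have mp : 0 < m by rewrite lt_def m0 andbT; apply: contra_neq c_neq0.
have := ln_le_subr1 (divr_gt0 mp cp); rewrite ln_div ?posrE // => le_ln.
have := ler_wpM2l (ltW cp) le_ln.
rewrite klE !mulrBr mulr1 mulrCA divff ?gt_eqF // mulr1; lra.
Qed.

Lemma xlnx_mix (t c d m : R) : m = t * c + (1 - t) * d ->
  xlnx m = t * xlnx c + (1 - t) * xlnx d - t * kl c m - (1 - t) * kl d m.
Proof. by move=> ->; rewrite !klE !xlnxE; ring. Qed.

Definition edge_entropy (u : R) := xlnx (1 - u) - xlnx u.

Definition edge_div (c m : R) := kl c m - kl (1 - c) (1 - m).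

Lemma edge_entropyC (u : R) : edge_entropy (1 - u) = - edge_entropy u.
Proof. by rewrite /edge_entropy subKr [RHS]opprB. Qed.

Lemma edge_entropy0 : edge_entropy 0 = 0 :> R.
Proof. by rewrite /edge_entropy subr0 xlnx0 xlnx1 subrr. Qed.

Lemma edge_entropy1 : edge_entropy 1 = 0 :> R.
Proof. by rewrite -[1]subr0 edge_entropyC edge_entropy0 oppr0. Qed.

Lemma edge_entropy_compl (u : R) : edge_entropy u + edge_entropy (1 - u) = 0.
Proof. by rewrite edge_entropyC subrr. Qed.

Lemma edge_divC (c m : R) : edge_div (1 - c) (1 - m) = - edge_div c m.
Proof. by rewrite /edge_div !subKr [RHS]opprB. Qed.

Lemma edge_div00 : edge_div 0 0 = 0 :> R.
Proof. by rewrite /edge_div kl0 subr0 klE subrr subrr. Qed.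

Lemma edge_entropy_mix (t c d m : R) : m = t * c + (1 - t) * d ->
  edge_entropy m = t * edge_entropy c + (1 - t) * edge_entropy d
                   + t * edge_div c m + (1 - t) * edge_div d m.
Proof.
move=> mE; have mE' : 1 - m = t * (1 - c) + (1 - t) * (1 - d) by rewrite mE; ring.
by rewrite /edge_entropy /edge_div (xlnx_mix mE) (xlnx_mix mE'); ring.
Qed.

End Entropy.

Section Segment.
Variable R : realType.

Lemma ge0_deriv2_ge0 (f df ddf : R -> R) :
  (forall t : R, 0 <= t <= 1 -> is_derive t (1 : R) f (df t)) ->
  (forall t : R, 0 <= t <= 1 -> is_derive t (1 : R) df (ddf t)) ->
  (forall t : R, 0 <= t <= 1 -> 0 <= ddf t) ->
  f 0 = 0 -> df 0 = 0 -> 0 <= f 1.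
Proof.
move=> hf hdf hddf f0 df0.
have sub01 (b x : R) : b <= 1 -> x \in `[0, b] -> 0 <= x <= 1.
  by move=> b1; rewrite in_itv /= => /andP[-> xb]; exact: le_trans xb b1.
have oo_cc (a b x : R) : x \in `]a, b[ -> x \in `[a, b].
  by rewrite !in_itv /= => /andP[/ltW -> /ltW ->].
have mvt (g dg : R -> R) b : 0 <= b <= 1 ->
    (forall t : R, 0 <= t <= 1 -> is_derive t (1 : R) g (dg t)) ->
    exists2 c, c \in `[0, b] & g b - g 0 = dg c * b.
  case/andP=> b0 b1 hg.
  have der x : x \in `[0, b] -> is_derive x 1 g (dg x).
    by move=> xb; apply: hg; exact: sub01 xb.
  have cont : {within `[0, b], continuous g}.
    apply: continuous_in_subspaceT => x; rewrite inE /= => /der [dgx _].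
    exact/differentiable_continuous/derivable1_diffP.
  have [c cb ->] := MVT_segment b0 (fun x xb => der x (oo_cc _ _ _ xb)) cont.
  by exists c; rewrite ?subr0.
have [c c01 fE] := mvt f df 1 ltac:(by rewrite ler01 lexx) hf.
have c1 : 0 <= c <= 1 by exact: sub01 c01.
have [d d0c dfE] := mvt df ddf c c1 hdf.
have dfc : 0 <= df c.
  move: dfE; rewrite df0 subr0 => ->; case/andP: c1 => c0 c1.
  by rewrite mulr_ge0 // hddf // (sub01 c).
by move: fE; rewrite f0 subr0 mulr1 => ->.
Qed.

Lemma is_derive_aff (a b t : R) : is_derive t (1 : R) (fun s => a + s * b) b.
Proof.
have -> : (fun s => a + s * b) = (cst a + id * cst b)%R by [].
by apply: is_derive_eq; rewrite /= !scaler0 !add0r /GRing.scale /= mulr1.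
Qed.

Lemma is_derive_ln_aff (a b t : R) : 0 < a + t * b ->
  is_derive t (1 : R) (fun s => ln (a + s * b)) (b / (a + t * b)).
Proof.
move=> pos.
have := @is_derive1_comp R (@ln R) (fun s => a + s * b) t (a + t * b)^-1 b.
move=> /(_ (is_derive1_ln pos) (is_derive_aff a b t)) comp.
by apply: is_derive_eq; rewrite mulrC.
Qed.

Definition xlog_aff (a b k s : R) := (a + s * b) * (ln (a + s * b) - k).
Definition xlog_aff' (a b k s : R) := b * (ln (a + s * b) - k + 1).

Lemma is_derive_xlog_aff (a b k t : R) : 0 < a + t * b ->
  is_derive t (1 : R) (xlog_aff a b k) (xlog_aff' a b k t).
Proof.
move=> pos; have := is_deriveM (is_derive_aff a b t)
  (is_deriveB (@is_derive_ln_aff a b t pos) (is_derive_cst k t 1)).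
move=> der; eapply is_derive_eq; first exact: der.
by rewrite /xlog_aff' /GRing.scale /= subr0 mulrCA divff ?gt_eqF // !fctE; ring.
Qed.

Lemma is_derive_xlog_aff' (a b k t : R) : 0 < a + t * b ->
  is_derive t (1 : R) (xlog_aff' a b k) (b ^+ 2 / (a + t * b)).
Proof.
move=> pos; have := is_deriveM (is_derive_cst b t 1)
  (is_deriveD (is_deriveB (@is_derive_ln_aff a b t pos) (is_derive_cst k t 1))
    (is_derive_cst (1 : R) t 1)).
move=> der; eapply is_derive_eq; first exact: der.
by rewrite /GRing.scale /= !fctE subr0 !addr0 mulr0 addr0 mulrA -expr2.
Qed.

Definition div_seg (q d s : R) :=
  xlog_aff q d (ln q) s - xlog_aff (1 - q) (- d) (ln (1 - q)) s.
Definition div_seg' (q d s : R) :=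
  xlog_aff' q d (ln q) s - xlog_aff' (1 - q) (- d) (ln (1 - q)) s.

Lemma aff_compl (q d t : R) : 1 - q + t * - d = 1 - (q + t * d).
Proof. by ring. Qed.

Lemma is_derive_div_seg (q d t : R) : 0 < q + t * d -> 0 < 1 - (q + t * d) ->
  is_derive t (1 : R) (div_seg q d) (div_seg' q d t).
Proof.
rewrite -aff_compl => pos pos'.
exact: is_deriveB (is_derive_xlog_aff _ pos) (is_derive_xlog_aff _ pos').
Qed.

Lemma is_derive_div_seg' (q d t : R) : 0 < q + t * d -> 0 < 1 - (q + t * d) ->
  is_derive t (1 : R) (div_seg' q d) (d ^+ 2 / (q + t * d) - d ^+ 2 / (1 - (q + t * d))).
Proof.
move=> pos pos'; rewrite -[in X in _ - X](sqrrN d) -aff_compl.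
rewrite -aff_compl in pos'.
exact: is_deriveB (is_derive_xlog_aff' _ pos) (is_derive_xlog_aff' _ pos').
Qed.

Lemma div_seg0 (q d : R) : div_seg q d 0 = 0.
Proof. by rewrite /div_seg /xlog_aff !mul0r !addr0 !subrr !mulr0 subrr. Qed.

Lemma div_seg'0 (q d : R) : div_seg' q d 0 = d *+ 2.
Proof. by rewrite /div_seg' /xlog_aff' !mul0r !addr0 !subrr; ring. Qed.

Lemma div_seg1 (p q : R) : div_seg q (p - q) 1 = edge_div p q.
Proof.
rewrite /div_seg /xlog_aff /edge_div !klE aff_compl !mul1r subrKC; ring.
Qed.

End Segment.

Section ThreePoint.
Variable R : realType.

Lemma quad3_ge0 (r1 r2 r3 x1 x2 x3 : R) : 0 < r1 -> 0 < r2 -> 0 < r3 ->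
  r1 + r2 + r3 = 1 -> x1 + x2 + x3 = 0 ->
  0 <= (x1 ^+ 2 / r1 - x1 ^+ 2 / (1 - r1)) + (x2 ^+ 2 / r2 - x2 ^+ 2 / (1 - r2))
       + (x3 ^+ 2 / r3 - x3 ^+ 2 / (1 - r3)).
Proof.
move=> r1p r2p r3p rsum xsum.
have -> : r3 = 1 - r1 - r2 by lra.
have -> : x3 = - x1 - x2 by lra.
have r3p' : 0 < 1 - r1 - r2 by lra.
(* the form is r1 r2 r3 times a weighted sum of squares of differences of the x_i / r_i *)
have -> : (x1 ^+ 2 / r1 - x1 ^+ 2 / (1 - r1)) + (x2 ^+ 2 / r2 - x2 ^+ 2 / (1 - r2))
    + ((- x1 - x2) ^+ 2 / (1 - r1 - r2) - (- x1 - x2) ^+ 2 / (1 - (1 - r1 - r2))) =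
  r1 * r2 * (1 - r1 - r2) *
    ((x1 / r1 - x2 / r2) ^+ 2 / (r1 + r2)
     + (x1 / r1 - (- x1 - x2) / (1 - r1 - r2)) ^+ 2 / (1 - r2)
     + (x2 / r2 - (- x1 - x2) / (1 - r1 - r2)) ^+ 2 / (1 - r1)).
  by field; rewrite !gt_eqF //; lra.
have sq_div_ge0 (y r : R) : 0 < r -> 0 <= y ^+ 2 / r by move=> rp; rewrite divr_ge0 ?sqr_ge0 ?ltW.
apply: mulr_ge0; first by rewrite !mulr_ge0 ?ltW.
by rewrite !addr_ge0 ?sq_div_ge0 //; lra.
Qed.

Lemma edge_div3_interior (p1 p2 p3 q1 q2 q3 : R) :
  0 < q1 -> 0 < q2 -> 0 < q3 -> 0 < p1 -> 0 < p2 -> 0 < p3 ->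
  p1 + p2 + p3 = 1 -> q1 + q2 + q3 = 1 ->
  0 <= edge_div p1 q1 + edge_div p2 q2 + edge_div p3 q3.
Proof.
move=> q1p q2p q3p p1p p2p p3p psum qsum.
have pos (p q t : R) : 0 < q -> 0 < p -> 0 <= t <= 1 -> 0 < q + t * (p - q).
  by move=> qp pp /andP[t0 t1]; nra.
have pos' t : 0 <= t <= 1 -> [/\ 0 < 1 - (q1 + t * (p1 - q1)),
    0 < 1 - (q2 + t * (p2 - q2)) & 0 < 1 - (q3 + t * (p3 - q3))].
  by move=> t01; have := pos _ _ _ q1p p1p t01; have := pos _ _ _ q2p p2p t01;
     have := pos _ _ _ q3p p3p t01; split; nra.
rewrite -!div_seg1.
apply: (@ge0_deriv2_ge0 _ (fun s => div_seg q1 (p1 - q1) s + div_seg q2 (p2 - q2) s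
    + div_seg q3 (p3 - q3) s)
  (fun s => div_seg' q1 (p1 - q1) s + div_seg' q2 (p2 - q2) s + div_seg' q3 (p3 - q3) s)).
- move=> t t01; have [n1 n2 n3] := pos' t t01.
  exact: is_deriveD (is_deriveD (is_derive_div_seg (pos _ _ _ q1p p1p t01) n1)
    (is_derive_div_seg (pos _ _ _ q2p p2p t01) n2))
    (is_derive_div_seg (pos _ _ _ q3p p3p t01) n3).
- move=> t t01; have [n1 n2 n3] := pos' t t01.
  exact: is_deriveD (is_deriveD (is_derive_div_seg' (pos _ _ _ q1p p1p t01) n1)
    (is_derive_div_seg' (pos _ _ _ q2p p2p t01) n2))
    (is_derive_div_seg' (pos _ _ _ q3p p3p t01) n3).
- move=> t t01; apply: quad3_ge0; try exact: pos; last by lra.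
  transitivity (q1 + q2 + q3 + t * ((p1 + p2 + p3) - (q1 + q2 + q3))); first by ring.
  by rewrite psum qsum subrr mulr0 addr0.
- by rewrite !div_seg0 !addr0.
- by rewrite !div_seg'0; lra.
Qed.

Lemma edge_div3_boundary (a b a' b' c' : R) :
  0 <= a -> 0 <= b -> 0 <= a' -> 0 <= b' -> 0 <= c' ->
  a + b = 1 -> a' + b' + c' = 1 -> (a' = 0 -> a = 0) -> (b' = 0 -> b = 0) ->
  0 <= edge_div a a' + edge_div b b' + edge_div 0 c'.
Proof.
move=> a0 b0 a'0 b'0 c'0 ab_sum sum' a'a b'b.
(* each summand is u (ln (u' + c') - ln u') up to the share u ln (1 - c'),
   and u' <= (u' + c') (1 - c') *)
have term (u u' : R) : 0 <= u -> 0 <= u' -> (u' = 0 -> u = 0) -> u' + c' <= 1 ->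
    0 <= u * (ln (u' + c') - ln u' + ln (1 - c')).
  move=> u0 u'0 u'u le1; have [->|u_neq0] := eqVneq u 0; first by rewrite mul0r.
  have u'p : 0 < u' by rewrite lt_def u'0 andbT; apply: contra_neq u_neq0.
  rewrite mulr_ge0 // addrAC subr_ge0 -lnM ?posrE ?ler_ln ?posrE; try lra.
  - nra.
  - by rewrite mulr_gt0 //; lra.
have := term a a' a0 a'0 a'a ltac:(lra); have := term b b' b0 b'0 b'b ltac:(lra).
rewrite /edge_div.
have -> : 1 - a' = b' + c' by lra.
have -> : 1 - b' = a' + c' by lra.
have -> : 1 - a = b by lra.
have -> : 1 - b = a by lra.
rewrite subr0 kl0 !klE !mul1r ln1.
have : ln (1 - c') = a * ln (1 - c') + b * ln (1 - c') by rewrite -mulrDl ab_sum mul1r.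
by rewrite !mulrDr !mulrN; lra.
Qed.

Lemma edge_div3_ge0 (a b c a' b' c' : R) :
  0 <= a -> 0 <= b -> 0 <= c -> 0 <= a' -> 0 <= b' -> 0 <= c' ->
  a + b + c = 1 -> a' + b' + c' = 1 ->
  (a' = 0 -> a = 0) -> (b' = 0 -> b = 0) -> (c' = 0 -> c = 0) ->
  0 <= edge_div a a' + edge_div b b' + edge_div c c'.
Proof.
move=> a0 b0 c0 a'0 b'0 c'0 sum sum' a'a b'b c'c.
have [c0' | c_neq0] := eqVneq c 0.
  by rewrite c0'; apply: edge_div3_boundary => //; lra.
have [b0' | b_neq0] := eqVneq b 0.
  by rewrite b0'; have := @edge_div3_boundary a c a' c' b'; lra.
have [a0' | a_neq0] := eqVneq a 0.
  by rewrite a0'; have := @edge_div3_boundary b c b' c' a'; lra.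
have pos (u u' : R) : 0 <= u -> 0 <= u' -> (u' = 0 -> u = 0) -> u != 0 -> 0 < u'.
  by move=> u0 u'0 u'u u_neq0; rewrite lt_def u'0 andbT; apply: contra_neq u_neq0.
apply: edge_div3_interior => //;
  [exact: (pos a) | exact: (pos b) | exact: (pos c) | ..]; rewrite lt_def.
- by rewrite a_neq0.
- by rewrite b_neq0.
- by rewrite c_neq0.
Qed.

(* Write (a, b, c) as the mixture of (a, b, 0) / (a + b) and (0, 0, 1), on which
   the sum vanishes, and use that the mixing defects are sums of edge_div. *)
Lemma edge_entropy3_ge0 (a b c : R) : 0 <= a -> 0 <= b -> 0 <= c -> a + b + c = 1 ->
  0 <= edge_entropy a + edge_entropy b + edge_entropy c.
Proof.
move=> a0 b0 c0 sum.
have [c0' | c_neq0] := eqVneq c 0.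
  by rewrite c0' edge_entropy0 addr0 (_ : b = 1 - a) ?edge_entropy_compl //; lra.
have [b0' | b_neq0] := eqVneq b 0.
  by rewrite b0' edge_entropy0 addr0 (_ : c = 1 - a) ?edge_entropy_compl //; lra.
have [a0' | a_neq0] := eqVneq a 0.
  by rewrite a0' edge_entropy0 add0r (_ : c = 1 - b) ?edge_entropy_compl //; lra.
have [ap bp cp] : [/\ 0 < a, 0 < b & 0 < c] by rewrite !lt_def a_neq0 b_neq0 c_neq0.
set t := a + b; have tp : 0 < t by rewrite addr_gt0.
have ct : c = 1 - t by rewrite /t; lra.
have aE : a = t * (a / t) + (1 - t) * 0 by rewrite mulr0 addr0 mulrC divfK ?gt_eqF.
have bE : b = t * (b / t) + (1 - t) * 0 by rewrite mulr0 addr0 mulrC divfK ?gt_eqF.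
have cE : c = t * 0 + (1 - t) * 1 by rewrite mulr0 add0r mulr1.
have abt : a / t + b / t = 1 by rewrite -mulrDl divff ?gt_eqF.
have [at0 bt0] : 0 <= a / t /\ 0 <= b / t by rewrite !divr_ge0 ?ltW.
have div_p : 0 <= t * (edge_div (a / t) a + edge_div (b / t) b + edge_div 0 c).
  by apply/mulr_ge0/edge_div3_ge0 => //; try lra; move=> ->; rewrite mul0r.
have div_q : 0 <= (1 - t) * (edge_div 0 a + edge_div 0 b + edge_div 1 c).
  by apply/mulr_ge0/edge_div3_ge0 => //; lra.
rewrite (edge_entropy_mix aE) (edge_entropy_mix bE) (edge_entropy_mix cE).
move: div_p div_q; rewrite (_ : b / t = 1 - a / t); last by lra.
rewrite edge_entropyC edge_entropy0 edge_entropy1; lra.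
Qed.

End ThreePoint.

Section Vertex.
Variables (R : realType) (I : Type).
Implicit Types (r : seq I) (x z : I -> R).

Lemma edge_entropy_superadd (a b : R) : 0 <= a -> 0 <= b -> a + b <= 1 ->
  edge_entropy (a + b) <= edge_entropy a + edge_entropy b.
Proof.
move=> a0 b0 ab1; have := @edge_entropy3_ge0 R a b (1 - (a + b)).
by rewrite edge_entropyC; lra.
Qed.

Lemma edge_div_superadd (a b a' b' : R) :
  0 <= a -> 0 <= b -> 0 <= a' -> 0 <= b' -> a + b <= 1 -> a' + b' <= 1 ->
  (a' = 0 -> a = 0) -> (b' = 0 -> b = 0) -> (a' + b' = 1 -> a + b = 1) ->
  edge_div (a + b) (a' + b') <= edge_div a a' + edge_div b b'.
Proof.
move=> a0 b0 a'0 b'0 ab1 ab1' a'a b'b ab'.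
have := @edge_div3_ge0 R a b (1 - (a + b)) a' b' (1 - (a' + b')).
rewrite edge_divC => /(_ a0 b0 _ a'0 b'0 _ _ _ a'a b'b) div3.
have compl1 : 1 - (a' + b') = 0 -> 1 - (a + b) = 0 by move=> e; have := ab' ltac:(lra); lra.
by have := div3 ltac:(lra) ltac:(lra) ltac:(ring) ltac:(ring) compl1; lra.
Qed.

Lemma sum_eq0_support r x z : (forall i, 0 <= z i) -> (forall i, z i = 0 -> x i = 0) ->
  \sum_(i <- r) z i = 0 -> \sum_(i <- r) x i = 0.
Proof.
move=> z0 zx; elim: r => [|i r IH]; rewrite ?big_nil ?big_cons // => zsum.
have rz0 : 0 <= \sum_(j <- r) z j by rewrite sumr_ge0.
by rewrite zx ?IH ?addr0 //; have := z0 i; lra.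
Qed.

Lemma edge_entropy_sum_le r x : (forall i, 0 <= x i) -> \sum_(i <- r) x i <= 1 ->
  edge_entropy (\sum_(i <- r) x i) <= \sum_(i <- r) edge_entropy (x i).
Proof.
move=> x0; elim: r => [|i r IH]; rewrite ?big_nil ?big_cons ?edge_entropy0 // => le1.
have rx0 : 0 <= \sum_(j <- r) x j by rewrite sumr_ge0.
have := x0 i; have := IH ltac:(have := x0 i; lra).
have := edge_entropy_superadd (x0 i) rx0 le1; lra.
Qed.

Lemma edge_div_sum_le r x z :
  (forall i, 0 <= x i) -> (forall i, 0 <= z i) -> (forall i, z i = 0 -> x i = 0) ->
  \sum_(i <- r) x i <= 1 -> \sum_(i <- r) z i <= 1 ->
  (\sum_(i <- r) z i = 1 -> \sum_(i <- r) x i = 1) ->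
  edge_div (\sum_(i <- r) x i) (\sum_(i <- r) z i) <= \sum_(i <- r) edge_div (x i) (z i).
Proof.
move=> x0 z0 zx; elim: r => [|i r IH]; rewrite ?big_nil ?big_cons ?edge_div00 //.
move=> le1 le1' eq1.
have rx0 : 0 <= \sum_(j <- r) x j by rewrite sumr_ge0.
have rz0 : 0 <= \sum_(j <- r) z j by rewrite sumr_ge0.
have [xi0 zi0] := (x0 i, z0 i).
have eq1_r : \sum_(j <- r) z j = 1 -> \sum_(j <- r) x j = 1.
  move=> rz1; have zi : z i = 0 by lra.
  by have := zx i zi; have := eq1; lra.
have := IH ltac:(lra) ltac:(lra) eq1_r.
have := edge_div_superadd xi0 rx0 zi0 rz0 le1 le1' (zx i) (sum_eq0_support z0 zx) eq1.
lra.
Qed.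

Lemma vertex_entropy_ge0 r x : (forall i, 0 <= x i) -> \sum_(i <- r) x i <= 1 ->
  0 <= \sum_(i <- r) edge_entropy (x i) - 2 * xlnx (1 - \sum_(i <- r) x i).
Proof.
move=> x0 le1; have rx0 : 0 <= \sum_(i <- r) x i by rewrite sumr_ge0.
have := edge_entropy_sum_le x0 le1; rewrite /edge_entropy.
have := @xlnx_le0 R (\sum_(i <- r) x i); have := @xlnx_le0 R (1 - \sum_(i <- r) x i).
by rewrite rx0 le1 subr_ge0 le1 /=; lra.
Qed.

Lemma vertex_div_ge0 r x z :
  (forall i, 0 <= x i) -> (forall i, 0 <= z i) -> (forall i, z i = 0 -> x i = 0) ->
  \sum_(i <- r) x i <= 1 -> \sum_(i <- r) z i <= 1 ->
  (\sum_(i <- r) z i = 1 -> \sum_(i <- r) x i = 1) ->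
  0 <= \sum_(i <- r) edge_div (x i) (z i)
       + 2 * kl (1 - \sum_(i <- r) x i) (1 - \sum_(i <- r) z i).
Proof.
move=> x0 z0 zx le1 le1' eq1.
have rx0 : 0 <= \sum_(i <- r) x i by rewrite sumr_ge0.
have rz0 : 0 <= \sum_(i <- r) z i by rewrite sumr_ge0.
have := edge_div_sum_le x0 z0 zx le1 le1' eq1; rewrite /edge_div.
have := kl_ge_sub rx0 rz0 (sum_eq0_support z0 zx).
have := @kl_ge_sub R (1 - \sum_(i <- r) x i) (1 - \sum_(i <- r) z i).
by rewrite !subr_ge0 le1 le1' => /(_ isT isT ltac:(lra)); lra.
Qed.

End Vertex.

Lemma mix_eq0 (R : realDomainType) (t a b : R) : 0 < t -> t <= 1 -> 0 <= a -> 0 <= b ->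
  t * a + (1 - t) * b = 0 -> a = 0.
Proof.
move=> tp t1 a0 b0 mix0; have /eqP : t * a = 0 by nra.
by rewrite mulf_eq0 gt_eqF //= => /eqP.
Qed.

Section Graph.
Variables (R : realType) (V : finType) (adj : rel V).
Hypothesis adj_irr : irreflexive adj.
Implicit Types (x y z : edge adj -> R).

Lemma card_edge (e : edge adj) : #|val e| = 2.
Proof.
case: e => e /= /existsP[u /existsP[v /andP[uv /eqP ->]]].
by rewrite cards2; case: eqP => // u_eq_v; move: uv; rewrite u_eq_v adj_irr.
Qed.

Lemma sum_incident (F : edge adj -> R) :
  \sum_(v : V) \sum_(e : edge adj | v \in val e) F e = 2 * \sum_(e : edge adj) F e.
Proof.
under eq_bigr do rewrite big_mkcond.
rewrite exchange_big /= mulr_sumr; apply: eq_bigr => e _.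
by rewrite -big_mkcond /= sumr_const card_edge mulr_natl.
Qed.

Lemma incident_seqE (v : V) (F : edge adj -> R) :
  \sum_(e : edge adj | v \in val e) F e
  = \sum_(e <- [seq e : edge adj <- index_enum (edge adj) | v \in val e]) F e.
Proof. by rewrite big_filter. Qed.

Lemma SBE x : SB x = \sum_(e : edge adj) edge_entropy (x e) - \sum_(v : V) xlnx (1 - vsum x v).
Proof. by congr (_ - _); apply: eq_bigr => e _; rewrite addrC. Qed.

Lemma SB_ge0 x : FM x -> 0 <= SB x.
Proof.
move=> [x0 x1]; rewrite -(pmulr_rge0 _ (ltr0Sn _ 1)) SBE mulrBr -sum_incident.
rewrite mulr_sumr -sumrB; apply: sumr_ge0 => v _.
by move: (x1 v); rewrite /vsum !incident_seqE; apply: vertex_entropy_ge0.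
Qed.

Definition bethe_div x z :=
  \sum_(e : edge adj) edge_div (x e) (z e) + \sum_(v : V) kl (1 - vsum x v) (1 - vsum z v).

Lemma bethe_div_ge0 x z : FM x -> FM z -> (forall e, z e = 0 -> x e = 0) ->
  (forall v, vsum z v = 1 -> vsum x v = 1) -> 0 <= bethe_div x z.
Proof.
move=> [x0 x1] [z0 z1] zx eq1; rewrite -(pmulr_rge0 _ (ltr0Sn _ 1)).
rewrite /bethe_div mulrDr -sum_incident mulr_sumr -big_split; apply: sumr_ge0 => v _.
move: (x1 v) (z1 v) (eq1 v); rewrite /vsum !incident_seqE.
exact: vertex_div_ge0.
Qed.

Lemma vsum_mix x y t v :
  vsum (fun e => t * x e + (1 - t) * y e) v = t * vsum x v + (1 - t) * vsum y v.
Proof. by rewrite /vsum big_split /= -!mulr_sumr. Qed.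

Lemma FM_mix x y t : FM x -> FM y -> 0 <= t <= 1 -> FM (fun e => t * x e + (1 - t) * y e).
Proof.
move=> [x0 x1] [y0 y1] /andP[t0 t1]; split => [e | v].
  by rewrite addr_ge0 // mulr_ge0 // ?subr_ge0.
by rewrite vsum_mix; have := x1 v; have := y1 v; nra.
Qed.

Lemma SB_mix x y t : let z := fun e => t * x e + (1 - t) * y e in
  SB z = t * SB x + (1 - t) * SB y + t * bethe_div x z + (1 - t) * bethe_div y z.
Proof.
move=> z; rewrite !SBE /bethe_div.
under eq_bigr do rewrite (@edge_entropy_mix _ t (x _) (y _) (z _) erefl).
have vsum_compl v : 1 - vsum z v = t * (1 - vsum x v) + (1 - t) * (1 - vsum y v).
  by rewrite vsum_mix; ring.
under [in X in _ - X]eq_bigr do rewrite (xlnx_mix (vsum_compl _)).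
by rewrite [in LHS]sumrB [in LHS]sumrB ![in LHS]big_split /= -!mulr_sumr; ring.
Qed.

Lemma bethe_div_mix_ge0 x y t : FM x -> FM y -> 0 <= t <= 1 ->
  0 <= t * bethe_div x (fun e => t * x e + (1 - t) * y e).
Proof.
move=> hx hy t01; have [-> | t_neq0] := eqVneq t 0; first by rewrite mul0r.
have /andP[t0 t1] := t01; have tp : 0 < t by rewrite lt_def t_neq0.
have [[x0 x1] [y0 y1]] := (hx, hy).
apply/mulr_ge0/bethe_div_ge0 => //; first exact: FM_mix.
  by move=> e /mix_eq0; apply => //; rewrite subr_ge0.
move=> v; rewrite vsum_mix => mix1.
have : t * (1 - vsum x v) + (1 - t) * (1 - vsum y v) = 0.
  by rewrite -(subrr 1) -[X in _ = _ - X]mix1; ring.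
by move=> /mix_eq0; rewrite !subr_ge0 => /(_ tp t1 (x1 v) (y1 v)); lra.
Qed.

End Graph.

Theorem proposition4p17 (R : realType) (V : finType) (adj : rel V)
  (adj_sym : symmetric adj) (adj_irr : irreflexive adj) :
  (forall x : edge adj -> R, FM x -> 0 <= SB x) /\
  (forall (x y : edge adj -> R) (t : R), FM x -> FM y -> 0 <= t <= 1 ->
     t * SB x + (1 - t) * SB y <= SB (fun e => t * x e + (1 - t) * y e)).
Proof.
split=> [x | x y t hx hy t01]; first exact: SB_ge0.
have t01' : 0 <= 1 - t <= 1 by case/andP: t01 => t0 t1; rewrite subr_ge0 t1 lerBlDr lerDl.
have := bethe_div_mix_ge0 adj_irr hy hx t01'.
rewrite (_ : (fun e => _) = (fun e => t * x e + (1 - t) * y e)); last first.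
  by apply: boolp.funext => e; ring.
have := bethe_div_mix_ge0 adj_irr hx hy t01.
rewrite SB_mix; lra.
Qed.
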